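(* Let $\mathcal{C}$ be a perfect k-category. Then every full, non-empty, closed subcategory of $\mathcal{C}$ (with the subspace topologies) is perfect.
   Context: A k-category is a small category whose object and morphism sets are k-spaces (compactly generated Hausdorff) such that the source, target, identity and composition maps are continuous. A non-empty k-category $\mathcal{C}$ is perfect when the map $\mathrm{Mor}(\mathcal{C})\to\mathrm{Ob}(\mathcal{C})\times\mathrm{Ob}(\mathcal{C})$, $f\mapsto(\text{source}(f),\text{target}(f))$, is a homeomorphism (product in k-spaces). *)

From HB Require Import structures.
From mathcomp Require Import all_boot all_order.
From mathcomp Require Import boolp classical_sets functions topology.
Set Implicit Arguments. Unset Strict Implicit. Unset Printing Implicit Defensive.
Local Open Scope classical_set_scope.

(* A "space" is a subset S of an ambient type together with a family of
   open subsets of S.  All topologies below are built from the ambient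
   MathComp-Analysis topologies. *)

Definition relopen (T : topologicalType) (S : set T) (U : set T) : Prop :=
  exists V, open V /\ U = V `&` S.

(* k-ification of the subspace topology on S (in the Hausdorff setting):
   U ⊆ S is k-open iff U ∩ K is open in K for every compact K ⊆ S. *)
Definition kopen (T : topologicalType) (S : set T) (U : set T) : Prop :=
  U `<=` S /\ forall K, K `<=` S -> compact K -> relopen K (U `&` K).

Definition is_kspace (T : topologicalType) (S : set T) : Prop :=
  (forall x y, S x -> S y -> x <> y ->
     exists U V, [/\ relopen S U, relopen S V, U x, V y & U `&` V = set0]) /\
  (forall U, kopen S U -> relopen S U).

(* product in k-spaces of (S1, subspace) and (S2, subspace): the k-ification
   of the product topology on S1 × S2 (the product topology of two subspaces
   is the subspace topology of S1 `*` S2 in T1 * T2) *)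
Definition kprod_open (T1 T2 : topologicalType) (S1 : set T1) (S2 : set T2)
  : set (T1 * T2) -> Prop := kopen (S1 `*` S2).

Definition cont (A B : Type) (SA : set A) (opA : set A -> Prop)
  (SB : set B) (opB : set B -> Prop) (f : A -> B) : Prop :=
  (forall x, SA x -> SB (f x)) /\
  (forall V, opB V -> V `<=` SB -> opA (SA `&` f @^-1` V)).

Definition homeo (A B : Type) (SA : set A) (opA : set A -> Prop)
  (SB : set B) (opB : set B -> Prop) (f : A -> B) : Prop :=
  [/\ set_bij SA SB f, cont SA opA SB opB f &
      forall U, U `<=` SA -> opA U -> opB (f @` U)].

(* data of a small category whose objects/morphisms lie in subsets of
   ambient topological types; comp g f = g ∘ f *)
Record cat_data (O M : topologicalType) := CatData {
  ob : set O; mor : set M;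
  src : M -> O; tgt : M -> O; idm : O -> M; comp : M -> M -> M }.

Definition composable (O M : topologicalType) (C : cat_data O M) : set (M * M) :=
  [set gf | mor C gf.1 /\ mor C gf.2 /\ tgt C gf.2 = src C gf.1].

Definition is_category (O M : topologicalType) (C : cat_data O M) : Prop :=
  [/\ (forall f, mor C f -> ob C (src C f) /\ ob C (tgt C f)),
      (forall x, ob C x -> [/\ mor C (idm C x), src C (idm C x) = x
                                & tgt C (idm C x) = x]),
      (forall g f, composable C (g, f) ->
         [/\ mor C (comp C g f), src C (comp C g f) = src C f
           & tgt C (comp C g f) = tgt C g]),
      (forall f, mor C f -> comp C f (idm C (src C f)) = f
                            /\ comp C (idm C (tgt C f)) f = f) &
      (forall h g f, composable C (g, f) -> composable C (h, g) ->
         comp C h (comp C g f) = comp C (comp C h g) f)].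

(* k-category: objects and morphisms are k-spaces, structure maps continuous;
   composition is continuous on the composable pairs, topologised as a
   subspace of the k-product Mor × Mor. *)
Definition is_kcategory (O M : topologicalType) (C : cat_data O M) : Prop :=
  [/\ is_category C, is_kspace (ob C), is_kspace (mor C) &
    [/\ cont (mor C) (relopen (mor C)) (ob C) (relopen (ob C)) (src C),
      cont (mor C) (relopen (mor C)) (ob C) (relopen (ob C)) (tgt C),
      cont (ob C) (relopen (ob C)) (mor C) (relopen (mor C)) (idm C) &
      cont (composable C)
           (fun W => exists V, kprod_open (mor C) (mor C) V /\ W = V `&` composable C)
           (mor C) (relopen (mor C)) (fun gf => comp C gf.1 gf.2)]].

Definition is_perfect (O M : topologicalType) (C : cat_data O M) : Prop :=
  [/\ is_kcategory C, ob C !=set0 &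
      homeo (mor C) (relopen (mor C)) (ob C `*` ob C) (kprod_open (ob C) (ob C))
            (fun f => (src C f, tgt C f))].

Definition full_subcat (O M : topologicalType) (C : cat_data O M) (X : set O)
  : cat_data O M :=
  CatData X [set f | mor C f /\ X (src C f) /\ X (tgt C f)]
          (src C) (tgt C) (idm C) (comp C).

From mathcomp Require Import all_boot all_order boolp classical_sets functions topology.
Set Implicit Arguments. Unset Strict Implicit. Unset Printing Implicit Defensive.
Local Open Scope classical_set_scope.

(* Since Ob and Mor carry the whole ambient topologies, the full subcategory on
   a closed set of objects X has as morphisms the closed preimage of X × X under
   (src, tgt).  The k-topology of a closed subspace is the trace of the ambient
   one: a k-open U of a closed S extends to the k-open U ∪ ∁S of the whole space.
   Hence k-spaceness, continuity of the structure maps and the homeomorphism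
   Mor ≅ Ob ×_k Ob all restrict from C to the subcategory. *)

Lemma closed_setX (T1 T2 : topologicalType) (A : set T1) (B : set T2) :
  closed A -> closed B -> closed (A `*` B).
Proof.
move=> cA cB; have -> : A `*` B = (fst @^-1` A) `&` (snd @^-1` B) by [].
apply: closedI; apply: preimage_closed => // -[a b] _;
  [exact: cvg_fst | exact: cvg_snd].
Qed.

Lemma relopenT (T : topologicalType) (U : set T) : relopen setT U <-> open U.
Proof.
split; first by case=> V [oV ->]; rewrite setIT.
by move=> oU; exists U; rewrite setIT.
Qed.

Lemma kopen_closedU (T : topologicalType) (S U : set T) :
  closed S -> kopen S U -> kopen setT (U `|` ~` S).
Proof.
move=> cS [US kU]; split => // K _ cK.
have [V [oV E]] := kU (K `&` S) (@subIsetr _ _ _) (compact_closedI cK cS).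
exists (V `|` ~` S); split; first by apply: openU => //; exact: closed_openC.
apply/seteqP; split => x /=.
  move=> [[Ux|nSx] Kx]; split => //; last by right.
  have : (U `&` (K `&` S)) x by split => //; split => //; exact: US.
  by rewrite E => -[]; left.
move=> [[Vx|nSx] Kx]; split => //; last by right.
have [Sx|nSx] := pselect (S x); last by right.
have : (V `&` (K `&` S)) x by [].
by rewrite -E => -[]; left.
Qed.

Lemma kopenI (T : topologicalType) (S A : set T) :
  kopen setT A -> kopen S (A `&` S).
Proof.
move=> [_ kA]; split; first exact: subIsetr.
move=> K KS cK; have [V [oV E]] := kA K (fun _ _ => I) cK.
exists V; split => //; rewrite -E; apply/seteqP; split => x /=.
  by move=> [[]].
by move=> [Ax Kx]; split => //; split => //; exact: KS.
Qed.

Lemma relopen_setI (T : topologicalType) (S U : set T) :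
  relopen setT U -> relopen S (U `&` S).
Proof. by case=> V [oV ->]; exists V; rewrite setIT. Qed.

Lemma is_kspace_closed (T : topologicalType) (S : set T) :
  is_kspace (setT : set T) -> closed S -> is_kspace S.
Proof.
move=> [sepT kT] cS; split.
  move=> x y Sx Sy xy; have [U [V [oU oV Ux Vy UV]]] := sepT x y I I xy.
  exists (U `&` S), (V `&` S); split => //; [exact: relopen_setI ..|].
  by apply/seteqP; split => z // [[Uz _] [Vz _]]; rewrite -UV.
move=> U kU; have [V [oV E]] := kT _ (kopen_closedU cS kU).
exists V; split => //; rewrite setIT in E; rewrite -E.
apply/seteqP; split => x /=.
  by move=> Ux; split; [left|exact: kU.1].
by move=> [[]].
Qed.

Lemma cont_restrict (A B : topologicalType) (SA : set A) (SB : set B)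
    (s : A -> B) :
  cont setT (relopen setT) setT (relopen setT) s ->
  (forall x, SA x -> SB (s x)) -> cont SA (relopen SA) SB (relopen SB) s.
Proof.
move=> [_ sC] sAB; split => // V [W [oW ->]] _.
have := sC W (proj2 (relopenT W) oW) (@subsetT _ _).
rewrite setTI => /relopenT oZ; exists (s @^-1` W); split => //.
apply/seteqP; split => x /=; first by move=> [Sx [Wx _]].
by move=> [Wx Sx]; split => //; split => //; exact: sAB.
Qed.

(* The topology on the domain of composition: the trace on the composable pairs
   of the k-topology of a product. *)
Lemma cont_ktrace_restrict (T B : topologicalType) (D S : set T) (SB : set B)
    (g : T -> B) :
  cont D (fun W => exists V, kopen setT V /\ W = V `&` D)
       setT (relopen setT) g ->
  (forall x, (D `&` S) x -> SB (g x)) ->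
  cont (D `&` S) (fun W => exists V, kopen S V /\ W = V `&` (D `&` S))
       SB (relopen SB) g.
Proof.
move=> [_ gC] gDS; split => // V [W [oW ->]] _.
have [V0 [kV0 E0]] := gC W (proj2 (relopenT W) oW) (@subsetT _ _).
exists (V0 `&` S); split; first exact: kopenI.
apply/seteqP; split => x /=.
  move=> [[Dx Sx] [Wx _]].
  have : (D `&` g @^-1` W) x by [].
  by rewrite E0 => -[V0x _].
move=> [[V0x Sx] [Dx _]]; have : (V0 `&` D) x by [].
rewrite -E0 => -[_ Wx]; split => //; split => //; exact: gDS.
Qed.

Lemma homeo_restrict (A B : topologicalType) (SA : set A) (Z : set B)
    (f : A -> B) :
  homeo setT (relopen setT) setT (kopen setT) f -> closed Z ->
  SA = f @^-1` Z -> homeo SA (relopen SA) Z (kopen Z) f.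
Proof.
move=> [[_ injf surjf] [_ fC] fO] cZ ->; split.
- split; first by move=> a.
    by move=> a b _ _; apply: injf; exact: in_setT.
  by move=> z Zz; have [a _ fa] := surjf z I; exists a => //=; rewrite fa.
- split=> // V kV VZ.
  have := fC _ (kopen_closedU cZ kV) (@subsetT _ _).
  rewrite setTI => /relopenT oU; exists (f @^-1` (V `|` ~` Z)); split => //.
  apply/seteqP; split => a /=; first by move=> [Za Va]; split => //; left.
  by move=> [[Va|nZa] Za].
- move=> _ _ [W [oW ->]].
  have := @kopenI _ Z _ (fO W (@subsetT _ _) (proj2 (relopenT W) oW)).
  congr kopen; apply/seteqP; split.
    by move=> b [[a Wa <-] Zb]; exists a.
  by move=> b [a [Wa Za] <-]; split => //; exists a.
Qed.

Lemma full_subcat_category (O M : topologicalType) (C : cat_data O M)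
    (X : set O) :
  is_category C -> X `<=` ob C -> is_category (full_subcat C X).
Proof.
move=> [mor_ob ob_idm mor_comp comp_idm compA] XC; split => /=.
- by move=> f [_ []].
- move=> x Xx; have [idx sx tx] := ob_idm x (XC x Xx).
  by split => //; split; rewrite ?sx ?tx.
- move=> g f [/= [Cg [_ Xtg]] [[Cf [Xsf _]] gf]].
  have [Cgf -> ->] := mor_comp g f (conj Cg (conj Cf gf)).
  by split => //; split.
- by move=> f [Cf _]; exact: comp_idm.
- move=> h g f [/= [Cg _] [[Cf _] gf]] [/= [Ch _] [_ hg]].
  exact: compA.
Qed.

Theorem mainTheorem6 (O M : topologicalType) (C : cat_data O M) :
  ob C = setT -> mor C = setT -> is_perfect C ->
  forall X : set O, X !=set0 -> X `<=` ob C ->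
    closed X -> closed (mor (full_subcat C X)) ->
    is_perfect (full_subcat C X).
Proof.
move=> obT morT [[catC kO kM [cs ct ci cc]] _ hC] X X0 XC cX cY.
have YE : mor (full_subcat C X) = (fun f => (src C f, tgt C f)) @^-1` (X `*` X).
  by rewrite /= morT; apply/seteqP; split => f /=; [case | split].
have compE : composable (full_subcat C X) =
    composable C `&` (mor (full_subcat C X) `*` mor (full_subcat C X)).
  apply/seteqP; split => -[g f] /=.
    by move=> [[Cg Xg] [[Cf Xf] gf]].
  by move=> [[Cg [Cf gf]] [Yg Yf]].
have [_ idmD compD _ _] := full_subcat_category catC XC.
rewrite obT morT in kO kM cs ct ci cc hC.
rewrite /kprod_open setXTT in hC; rewrite /kprod_open setXTT in cc.
split=> //; last by apply: homeo_restrict => //; exact: closed_setX.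
split; [exact: full_subcat_category | exact: is_kspace_closed ..|].
split.
- by apply: cont_restrict => // f; rewrite YE => -[].
- by apply: cont_restrict => // f; rewrite YE => -[].
- by apply: cont_restrict => // x /idmD [].
- rewrite compE; apply: (cont_ktrace_restrict cc) => -[g f] gf.
  by have [] := compD g f; first by rewrite compE.
Qed.
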